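(* Let $D_1\subset\mathbb{R}^2$ be an open disc centered at the origin and let $\mathbf{f}=(f_1,f_2)$ be a vector field on $\mathbb{R}^2$ with $f_1,f_2\in C^2_c(D_1)$. Let $\boldsymbol{\gamma}_1,\dots,\boldsymbol{\gamma}_m$ be distinct unit vectors in $\mathbb{R}^2$ and $c_1,\dots,c_m$ nonzero real numbers, and let $\mathcal{S}\mathbf{f}$ be the corresponding vector-valued star transform. For $\boldsymbol{\psi}\in\mathbb{S}^1\setminus(\mathcal{Z}_1\cup\mathcal{Z}_2)$ let $$Q(\boldsymbol{\psi})=\begin{bmatrix}\boldsymbol{\gamma}(\boldsymbol{\psi})\\ \boldsymbol{\gamma}(\boldsymbol{\psi})^\perp\end{bmatrix}^{-1}\in GL(2,\mathbb{R}),$$ the inverse of the $2\times 2$ matrix whose rows are $\boldsymbol{\gamma}(\boldsymbol{\psi})$ and $\boldsymbol{\gamma}(\boldsymbol{\psi})^\perp$. Then for every $\boldsymbol{\psi}\in\mathbb{S}^1\setminus(\mathcal{Z}_1\cup\mathcal{Z}_2)$ and every $s\in\mathbb{R}$, $$Q(\boldsymbol{\psi})\,\frac{d}{ds}\mathcal{R}(\mathcal{S}\mathbf{f})(\boldsymbol{\psi},s)=\mathcal{R}\mathbf{f}(\boldsymbol{\psi},s),$$ where $\mathcal{R}$ is applied componentwise to vector-valued functions.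
   Context: For $\mathbf{x}=(x_1,x_2)$ set $\mathbf{x}^\perp=(-x_2,x_1)$. For a unit vector $\boldsymbol{\gamma}$, $\mathcal{X}_{\boldsymbol{\gamma}}h(\mathbf{x})=\int_0^\infty h(\mathbf{x}+t\boldsymbol{\gamma})\,dt$ (applied componentwise to vectors). The vector-valued star transform is $\mathcal{S}\mathbf{f}=\sum_{i=1}^m c_i\,\mathcal{X}_{\boldsymbol{\gamma}_i}\begin{bmatrix}\mathbf{f}\cdot\boldsymbol{\gamma}_i\\ \mathbf{f}\cdot\boldsymbol{\gamma}_i^\perp\end{bmatrix}$, an $\mathbb{R}^2$-valued function on $\mathbb{R}^2$. $\mathcal{R}h(\boldsymbol{\psi},s)=\int_{\mathbb{R}}h(s\boldsymbol{\psi}+t\boldsymbol{\psi}^\perp)\,dt$ is the Radon transform of a scalar function $h$ over the line $\{\mathbf{x}:\mathbf{x}\cdot\boldsymbol{\psi}=s\}$, $\boldsymbol{\psi}\in\mathbb{S}^1$, $s\in\mathbb{R}$. The set of singular directions of type 1 is $\mathcal{Z}_1=\bigcup_{i=1}^m\{\boldsymbol{\psi}\in\mathbb{S}^1:\boldsymbol{\psi}\cdot\boldsymbol{\gamma}_i=0\}$. For $\boldsymbol{\psi}\in\mathbb{S}^1\setminus\mathcal{Z}_1$ define $\boldsymbol{\gamma}(\boldsymbol{\psi})=-\sum_{i=1}^m\frac{c_i\boldsymbol{\gamma}_i}{\boldsymbol{\psi}\cdot\boldsymbol{\gamma}_i}\in\mathbb{R}^2$, and the set of singular directions of type 2 is $\mathcal{Z}_2=\{\boldsymbol{\psi}\in\mathbb{S}^1\setminus\mathcal{Z}_1:\boldsymbol{\gamma}(\boldsymbol{\psi})=0\}$.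 *)

From Stdlib Require Import Reals.
From Coquelicot Require Import Coquelicot.
Open Scope R_scope.

Definition vadd (x y : R * R) : R * R := (fst x + fst y, snd x + snd y).
Definition vscal (a : R) (x : R * R) : R * R := (a * fst x, a * snd x).
Definition dot (x y : R * R) : R := fst x * fst y + snd x * snd y.
Definition perp (x : R * R) : R * R := (- snd x, fst x).
Definition vnorm (x : R * R) : R := sqrt (dot x x).
Definition is_unit (x : R * R) : Prop := dot x x = 1.

Fixpoint sumR (m : nat) (F : nat -> R) : R :=
  match m with O => 0 | S k => sumR k F + F k end.
Fixpoint vsum (m : nat) (F : nat -> R * R) : R * R :=
  match m with O => (0, 0) | S k => vadd (vsum k F) (F k) end.

Definition partial1 (h : R * R -> R) (p : R * R) : R :=
  Derive (fun t => h (t, snd p)) (fst p).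
Definition partial2 (h : R * R -> R) (p : R * R) : R :=
  Derive (fun t => h (fst p, t)) (snd p).
Definition C1 (h : R * R -> R) : Prop :=
  (forall p : R * R,
      ex_derive (fun t => h (t, snd p)) (fst p) /\
      ex_derive (fun t => h (fst p, t)) (snd p)) /\
  (forall p : R * R,
      continuous h p /\ continuous (partial1 h) p /\ continuous (partial2 h) p).
Definition C2 (h : R * R -> R) : Prop :=
  C1 h /\ C1 (partial1 h) /\ C1 (partial2 h).

(* h in C^2_c(D_1), D_1 = open disc of radius rho centered at the origin:
   h is C^2 and its (closed) support is a compact subset of D_1, i.e.
   h vanishes outside some closed disc of radius r < rho. *)
Definition C2c_disc (rho : R) (h : R * R -> R) : Prop :=
  C2 h /\ exists r : R, r < rho /\ forall x : R * R, r < vnorm x -> h x = 0.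

Definition Xray (gam : R * R) (h : R * R -> R) (x : R * R) : R :=
  RInt_gen (fun t => h (vadd x (vscal t gam))) (at_point 0) (Rbar_locally p_infty).

Definition Radon (h : R * R -> R) (psi : R * R) (s : R) : R :=
  RInt_gen (fun t => h (vadd (vscal s psi) (vscal t (perp psi))))
           (Rbar_locally m_infty) (Rbar_locally p_infty).

Definition star (m : nat) (c : nat -> R) (gam : nat -> R * R)
    (f : R * R -> R * R) (x : R * R) : R * R :=
  vsum m (fun i =>
    vscal (c i)
      (Xray (gam i) (fun y => dot (f y) (gam i)) x,
       Xray (gam i) (fun y => dot (f y) (perp (gam i))) x)).

Definition RadonV (F : R * R -> R * R) (psi : R * R) (s : R) : R * R :=
  (Radon (fun y => fst (F y)) psi s, Radon (fun y => snd (F y)) psi s).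

Definition in_Z1 (m : nat) (gam : nat -> R * R) (psi : R * R) : Prop :=
  exists i, (i < m)%nat /\ dot psi (gam i) = 0.

Definition gamma_psi (m : nat) (c : nat -> R) (gam : nat -> R * R)
    (psi : R * R) : R * R :=
  vscal (-1) (vsum m (fun i => vscal (c i / dot psi (gam i)) (gam i))).

Definition in_Z2 (m : nat) (c : nat -> R) (gam : nat -> R * R) (psi : R * R) : Prop :=
  ~ in_Z1 m gam psi /\ gamma_psi m c gam psi = (0, 0).

(* ---- 2x2 matrices: ((a, b), (c, d)) = rows (a b) and (c d) *)
Definition mat2 := ((R * R) * (R * R))%type.
Definition mat2_of_rows (r1 r2 : R * R) : mat2 := (r1, r2).
Definition det2 (M : mat2) : R :=
  fst (fst M) * snd (snd M) - snd (fst M) * fst (snd M).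
Definition inv2 (M : mat2) : mat2 :=
  let a := fst (fst M) in let b := snd (fst M) in
  let c := fst (snd M) in let d := snd (snd M) in
  let k := / det2 M in
  ((k * d, - (k * b)), (- (k * c), k * a)).
Definition mulmv (M : mat2) (v : R * R) : R * R := (dot (fst M) v, dot (snd M) v).

Definition Qmat (m : nat) (c : nat -> R) (gam : nat -> R * R) (psi : R * R) : mat2 :=
  inv2 (mat2_of_rows (gamma_psi m c gam psi) (perp (gamma_psi m c gam psi))).

(* Write points as x = s psi + t psi^perp.  For a branch direction gam with
   a = psi . gam <> 0 and b = gam . psi^perp we have
   x + sigma gam = (s + sigma a) psi + (t + sigma b) psi^perp, so moving s by a delta and t by
   b delta only shifts sigma by delta in the divergent beam integral.  As the t-integral is
   translation invariant, R(X_gam h)(psi, s0 + a delta) = R(X_gam h)(psi, s0) minus the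
   integral of h over the strip 0 <= sigma <= delta, and differentiating at delta = 0 gives
   d/ds R(X_gam h)(psi, s) = - Rh(psi, s) / (psi . gam).  Summing over the branches, the two
   components of d/ds R(Sf) are gamma(psi) . Rf and gamma(psi)^perp . Rf, and the matrix with
   rows gamma(psi), gamma(psi)^perp is invertible because gamma(psi) <> 0 off Z2. *)

From Stdlib Require Import Reals Lra Classical ClassicalEpsilon FunctionalExtensionality.
From Coquelicot Require Import Coquelicot.
Open Scope R_scope.

Lemma Rabs_sub_le_add (x y : R) : Rabs x - Rabs y <= Rabs (x + y).
Proof.
  pose proof (Rabs_triang_inv x (- y)) as H.
  rewrite Rabs_Ropp in H. now replace (x - - y) with (x + y) in H by ring.
Qed.

Lemma is_RInt_gen_eventually (f : R -> R) (Fa Fb : (R -> Prop) -> Prop)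
    {FFa : Filter Fa} {FFb : Filter Fb} (Pa Pb : R -> Prop) (l : R) :
  Fa Pa -> Fb Pb -> (forall x y, Pa x -> Pb y -> is_RInt f x y l) ->
  is_RInt_gen f Fa Fb l.
Proof.
  intros HA HB H P HP.
  apply Filter_prod with Pa Pb; auto.
  intros x y Hx Hy. exists l. split; [now apply H |].
  now apply locally_singleton.
Qed.

Lemma ex_RInt_cont (f : R -> R) a b : (forall t, continuous f t) -> ex_RInt f a b.
Proof. intros Hc. apply (ex_RInt_continuous (V := R_CompleteNormedModule)); auto. Qed.

Lemma RInt_vanishing (f : R -> R) a b :
  (forall t, Rmin a b < t < Rmax a b -> f t = 0) -> RInt f a b = 0.
Proof.
  intros H. rewrite (RInt_ext f (fun _ => 0)) by exact H.
  rewrite RInt_const. unfold scal; simpl; unfold mult; simpl; ring.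
Qed.

Section VanishingTails.
Variable f : R -> R.
Hypothesis Hc : forall t, continuous f t.

Lemma RInt_vanishing_r B x y :
  (forall t, B < t -> f t = 0) -> B <= y -> RInt f x y = RInt f x B.
Proof.
  intros Hz Hy.
  rewrite <- (RInt_Chasles f x B y) by apply ex_RInt_cont, Hc.
  rewrite (RInt_vanishing f B y).
  - change (RInt f x B + 0 = RInt f x B). ring.
  - intros t Ht. apply Hz. rewrite Rmin_left in Ht; lra.
Qed.

Lemma RInt_vanishing_l A x y :
  (forall t, t < A -> f t = 0) -> x <= A -> RInt f x y = RInt f A y.
Proof.
  intros Hz Hx.
  rewrite <- (RInt_Chasles f x A y) by apply ex_RInt_cont, Hc.
  rewrite (RInt_vanishing f x A).
  - change (0 + RInt f A y = RInt f A y). ring.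
  - intros t Ht. apply Hz. rewrite Rmax_right in Ht; lra.
Qed.

Lemma RInt_gen_pos_vanishing B :
  (forall t, B < t -> f t = 0) ->
  RInt_gen f (at_point 0) (Rbar_locally p_infty) = RInt f 0 B.
Proof.
  intros Hz. apply is_RInt_gen_unique.
  apply (is_RInt_gen_eventually f _ _ (fun x => x = 0) (fun y => B < y)).
  - reflexivity.
  - now exists B.
  - intros x y -> Hy. rewrite <- (RInt_vanishing_r B 0 y Hz) by lra.
    apply (RInt_correct (V := R_CompleteNormedModule)), ex_RInt_cont, Hc.
Qed.

End VanishingTails.

Lemma RInt_shift (f : R -> R) v x y : (forall t, continuous f t) ->
  RInt (fun t => f (t + v)) x y = RInt f (x + v) (y + v).
Proof.
  intros Hc. pose proof (RInt_comp_lin f 1 v x y) as Hlin.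
  rewrite !Rmult_1_l in Hlin. rewrite <- Hlin by apply ex_RInt_cont, Hc.
  apply RInt_ext. intros t _. unfold scal; simpl; unfold mult; simpl. now rewrite !Rmult_1_l.
Qed.

Definition RInt_line (f : R -> R) : R :=
  RInt_gen f (Rbar_locally m_infty) (Rbar_locally p_infty).

Definition cont_supp (K : R) (f : R -> R) : Prop :=
  (forall t, continuous f t) /\ 0 <= K /\ forall t, K < Rabs t -> f t = 0.

Lemma cont_supp_vanishing K f t : cont_supp K f -> t < - K \/ K < t -> f t = 0.
Proof.
  intros [_ [HK Hz]] Ht. apply Hz.
  destruct Ht; [rewrite Rabs_left by lra | rewrite Rabs_right by lra]; lra.
Qed.

Lemma is_RInt_line_supp K K' f : cont_supp K f -> K <= K' ->
  is_RInt_gen f (Rbar_locally m_infty) (Rbar_locally p_infty) (RInt f (- K') K').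
Proof.
  intros Hf HK. pose proof Hf as [Hc [HK0 _]].
  apply (is_RInt_gen_eventually f _ _ (fun x => x < - K') (fun y => K' < y)).
  - now exists (- K').
  - now exists K'.
  - intros x y Hx Hy.
    replace (RInt f (- K') K') with (RInt f x y).
    + apply (RInt_correct (V := R_CompleteNormedModule)), ex_RInt_cont, Hc.
    + rewrite (RInt_vanishing_l f Hc (- K') x y), (RInt_vanishing_r f Hc K' (- K') y);
        try lra; intros t Ht; apply (cont_supp_vanishing K); auto; lra.
Qed.

Lemma RInt_line_supp K K' f : cont_supp K f -> K <= K' -> RInt_line f = RInt f (- K') K'.
Proof. intros; now apply is_RInt_gen_unique, (is_RInt_line_supp K). Qed.

Lemma is_RInt_line K f : cont_supp K f ->
  is_RInt_gen f (Rbar_locally m_infty) (Rbar_locally p_infty) (RInt_line f).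
Proof.
  intros Hf. rewrite (RInt_line_supp K K) by (auto; lra).
  apply (is_RInt_line_supp K); auto; lra.
Qed.

Lemma cont_supp_shift K f v : cont_supp K f -> cont_supp (K + Rabs v) (fun t => f (t + v)).
Proof.
  intros [Hc [HK Hz]]. split; [| split].
  - intros t. apply (continuous_comp (fun t => t + v) f); [| apply Hc].
    apply (continuous_plus (fun t : R => t) (fun _ => v));
      [apply continuous_id | apply continuous_const].
  - pose proof (Rabs_pos v); lra.
  - intros t Ht. apply Hz. pose proof (Rabs_sub_le_add t v). lra.
Qed.

Lemma RInt_line_shift K f v : cont_supp K f -> RInt_line (fun t => f (t + v)) = RInt_line f.
Proof.
  intros Hf. pose proof Hf as [Hc [HK _]].
  pose proof (Rle_abs v). pose proof (Rabs_Ropp v). pose proof (Rle_abs (- v)).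
  rewrite (RInt_line_supp (K + Rabs v) (K + Rabs v)) by (try apply cont_supp_shift; auto; lra).
  rewrite (RInt_line_supp K K) by (auto; lra).
  transitivity (RInt f (- (K + Rabs v) + v) (K + Rabs v + v)).
  - exact (RInt_shift f v _ _ Hc).
  - rewrite (RInt_vanishing_l f Hc (- K)), (RInt_vanishing_r f Hc K); try lra;
      intros t Ht; apply (cont_supp_vanishing K); auto; lra.
Qed.

Lemma RInt_line_minus K1 K2 f g : cont_supp K1 f -> cont_supp K2 g ->
  RInt_line (fun t => f t - g t) = RInt_line f - RInt_line g.
Proof.
  intros Hf Hg. unfold RInt_line at 1.
  apply (is_RInt_gen_unique (V := R_CompleteNormedModule)).
  apply (is_RInt_gen_minus (V := R_NormedModule));
    [apply (is_RInt_line K1) | apply (is_RInt_line K2)]; assumption.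
Qed.

Lemma RInt_line_lin2 K f g x y : cont_supp K f -> cont_supp K g ->
  RInt_line (fun t => f t * x + g t * y) = RInt_line f * x + RInt_line g * y.
Proof.
  intros Hf Hg. unfold RInt_line at 1.
  apply (is_RInt_gen_unique (V := R_CompleteNormedModule)).
  apply (is_RInt_gen_ext (fun t => plus (scal x (f t)) (scal y (g t)))).
  { apply filter_forall. intros _ t _. unfold plus, scal; simpl; unfold mult; simpl; ring. }
  replace (RInt_line f * x + RInt_line g * y)
    with (plus (scal x (RInt_line f)) (scal y (RInt_line g)))
    by (unfold plus, scal; simpl; unfold mult; simpl; ring).
  apply (is_RInt_gen_plus (V := R_NormedModule));
    apply (is_RInt_gen_scal (V := R_NormedModule)); eapply is_RInt_line; eassumption.
Qed.

Lemma is_RInt_line_sum (m : nat) (F : nat -> R -> R) (l : nat -> R) :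
  (forall i, (i < m)%nat ->
     is_RInt_gen (F i) (Rbar_locally m_infty) (Rbar_locally p_infty) (l i)) ->
  is_RInt_gen (fun t => sumR m (fun i => F i t))
    (Rbar_locally m_infty) (Rbar_locally p_infty) (sumR m l).
Proof.
  induction m as [| m IH]; intros H; simpl.
  - apply (is_RInt_gen_eventually _ _ _ (fun _ => True) (fun _ => True)).
    + now exists 0.
    + now exists 0.
    + intros x y _ _.
      pose proof (is_RInt_const (V := R_NormedModule) x y 0) as H0.
      rewrite (scal_zero_r (V := R_NormedModule)) in H0. exact H0.
  - apply (is_RInt_gen_plus (fun t => sumR m (fun i => F i t)) (F m)); auto.
Qed.

Lemma continuity_2d_pt_slice (F : R -> R -> R) x y :
  continuity_2d_pt F x y -> continuous (F x) y.
Proof.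
  intros H. apply (continuous_comp_2 (fun _ : R => x) (fun v : R => v) F).
  - apply continuous_const.
  - apply continuous_id.
  - now apply continuity_2d_pt_filterlim.
Qed.

Lemma continuous_affine2 (c0 c1 c2 : R) (z : R * R) :
  continuous (fun z : R * R => c0 + c1 * fst z + c2 * snd z) z.
Proof.
  apply (continuous_plus (fun z : R * R => c0 + c1 * fst z) (fun z : R * R => c2 * snd z)).
  - apply (continuous_plus (fun _ : R * R => c0) (fun z : R * R => c1 * fst z)).
    + apply continuous_const.
    + apply (continuous_mult (fun _ : R * R => c1) (fun z : R * R => fst z));
        [apply continuous_const | apply continuous_fst].
  - apply (continuous_mult (fun _ : R * R => c2) (fun z : R * R => snd z));
      [apply continuous_const | apply continuous_snd].
Qed.

Lemma continuity_2d_pt_affine (k : R -> R -> R) (Hk : forall u v, continuity_2d_pt k u v)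
    (F : R -> R -> R) c0 c1 c2 d0 d1 d2 :
  (forall x y, F x y = k (c0 + c1 * x + c2 * y) (d0 + d1 * x + d2 * y)) ->
  forall x y, continuity_2d_pt F x y.
Proof.
  intros HF x y. apply (continuity_2d_pt_ext (fun x y => k (c0 + c1 * x + c2 * y) (d0 + d1 * x + d2 * y))).
  { intros; symmetry; apply HF. }
  apply continuity_2d_pt_filterlim.
  apply (continuous_comp_2 (fun z : R * R => c0 + c1 * fst z + c2 * snd z)
           (fun z : R * R => d0 + d1 * fst z + d2 * snd z) k);
    try apply continuous_affine2.
  now apply continuity_2d_pt_filterlim.
Qed.

Section ParametricIntegral.
Variable k : R -> R -> R.
Hypothesis Hk : forall t s, continuity_2d_pt k t s.

(* Compactness of [a, b] makes the moduli of continuity at the points (t0, s) uniform in s. *)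
Lemma continuity_2d_pt_unif_slice a b t0 (eps : posreal) :
  exists d : posreal, forall t s, Rabs (t - t0) < d -> a <= s <= b ->
    Rabs (k t s - k t0 s) <= 2 * eps.
Proof.
  set (delta s := proj1_sig (constructive_indefinite_description _ (Hk t0 s eps))).
  assert (Hdelta : forall s u v, Rabs (u - t0) < delta s -> Rabs (v - s) < delta s ->
            Rabs (k u v - k t0 s) < eps).
  { intros s. unfold delta. now destruct constructive_indefinite_description. }
  destruct (compactness_value_1d a b delta) as [d Hd].
  exists d. intros t s Ht Hs. apply NNPP. intros Hn. apply (Hd s Hs).
  intros [u [_ [Hsu Hdu]]]. apply Hn.
  assert (H1 := Hdelta u t s ltac:(lra) Hsu).
  assert (H2 := Hdelta u t0 s ltac:(rewrite Rminus_diag, Rabs_R0; apply cond_pos) Hsu).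
  replace (k t s - k t0 s) with ((k t s - k t0 u) - (k t0 s - k t0 u)) by ring.
  eapply Rle_trans; [apply Rabs_triang |]. rewrite Rabs_Ropp. lra.
Qed.

Lemma ex_RInt_param a b t : ex_RInt (k t) a b.
Proof. apply ex_RInt_cont. intros s. now apply continuity_2d_pt_slice. Qed.

Lemma RInt_param_continuous_le a b t0 :
  a <= b -> continuous (fun t => RInt (k t) a b) t0.
Proof.
  intros Hab. apply (filterlim_locally (F := locally t0)). intros eps.
  assert (He : 0 < eps / (2 * (b - a + 1))).
  { apply Rdiv_lt_0_compat; [apply cond_pos | lra]. }
  destruct (continuity_2d_pt_unif_slice a b t0 (mkposreal _ He)) as [d Hd]; simpl in Hd.
  exists d. intros t Ht. change (Rabs (RInt (k t) a b - RInt (k t0) a b) < eps).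
  rewrite <- (RInt_minus (V := R_CompleteNormedModule)) by apply ex_RInt_param.
  eapply Rle_lt_trans.
  { apply abs_RInt_le_const; [exact Hab | | intros s Hs; now apply Hd].
    apply (ex_RInt_minus (V := R_NormedModule)); apply ex_RInt_param. }
  replace ((b - a) * (2 * (eps / (2 * (b - a + 1)))))
    with (eps * ((b - a) / (b - a + 1))) by (field; lra).
  rewrite <- (Rmult_1_r eps) at 2. apply Rmult_lt_compat_l; [apply cond_pos |].
  apply Rmult_lt_reg_r with (b - a + 1); [lra |].
  unfold Rdiv. rewrite Rmult_assoc, Rinv_l; lra.
Qed.

Lemma RInt_param_continuous a b t0 : continuous (fun t => RInt (k t) a b) t0.
Proof.
  destruct (Rle_dec a b); [now apply RInt_param_continuous_le |].
  apply (continuous_ext (fun t => opp (RInt (k t) b a))).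
  { intros t. now rewrite (opp_RInt_swap (V := R_CompleteNormedModule)) by apply ex_RInt_param. }
  apply (continuous_opp (fun t => RInt (k t) b a)), RInt_param_continuous_le. lra.
Qed.

End ParametricIntegral.

Lemma is_derive_RInt_upper (g : R -> R) a u : (forall t, continuous g t) ->
  is_derive (fun u => RInt g a u) u (g u).
Proof.
  intros Hc. apply (is_derive_RInt g (fun u => RInt g a u) a); [| apply Hc].
  apply filter_forall. intros y.
  apply (RInt_correct (V := R_CompleteNormedModule)), ex_RInt_cont, Hc.
Qed.

Section RayIntegral.
Variable k : R -> R -> R.
Hypothesis Hk : forall u v, continuity_2d_pt k u v.
Variable r : R.
Hypothesis Hr : 0 <= r.
Hypothesis Hsupp : forall u v, r < Rabs u \/ r < Rabs v -> k u v = 0.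
Variables a b : R.
Hypothesis Ha : a <> 0.

Definition kray (s t sg : R) : R := k (s + sg * a) (t + sg * b).

Definition ray_Radon (s : R) : R :=
  RInt_line (fun t => RInt_gen (kray s t) (at_point 0) (Rbar_locally p_infty)).

Lemma kray_continuity_2d s t sg : continuity_2d_pt (kray s) t sg.
Proof. apply (continuity_2d_pt_affine k Hk _ s 0 a 0 1 b). intros; unfold kray; f_equal; ring. Qed.

Lemma kray_continuous s t sg : continuous (kray s t) sg.
Proof. apply continuity_2d_pt_slice, kray_continuity_2d. Qed.

Lemma kray_vanishing_t s t sg L :
  Rabs sg <= L -> r + L * Rabs b < Rabs t -> kray s t sg = 0.
Proof.
  intros Hsg Ht. apply Hsupp. right.
  pose proof (Rabs_sub_le_add t (sg * b)) as H. rewrite Rabs_mult in H.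
  pose proof (Rabs_pos b). pose proof (Rabs_pos sg). nra.
Qed.

Lemma RInt_kray_supp s x : cont_supp (r + Rabs x * Rabs b) (fun t => RInt (kray s t) 0 x).
Proof.
  split; [| split].
  - intros t. apply (RInt_param_continuous (kray s)), kray_continuity_2d.
  - pose proof (Rabs_pos x). pose proof (Rabs_pos b). nra.
  - intros t Ht. apply RInt_vanishing. intros sg Hsg.
    apply (kray_vanishing_t _ _ _ (Rabs x)); [| exact Ht].
    destruct (Rle_dec 0 x).
    + rewrite Rmin_left, Rmax_right in Hsg by lra. rewrite !Rabs_right by lra. lra.
    + rewrite Rmin_right, Rmax_left in Hsg by lra. rewrite !Rabs_left by lra. lra.
Qed.

Variable s0 : R.

Let A := Rabs a.
Let T0 := (Rabs s0 + 1 + r) / A.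
Let K := r + Rabs b / A.

Let A_pos : 0 < A.
Proof. now apply Rabs_pos_lt. Qed.

Let invA_pos : 0 < 1 / A.
Proof. apply Rdiv_lt_0_compat; lra. Qed.

Let T0_pos : 0 < T0.
Proof. apply Rdiv_lt_0_compat; [pose proof (Rabs_pos s0) |]; lra. Qed.

Let shift_close dl : Rabs dl <= 1 / A -> Rabs (s0 + a * dl - s0) <= 1.
Proof.
  intros Hdl. replace (s0 + a * dl - s0) with (a * dl) by ring. rewrite Rabs_mult. fold A.
  apply (Rmult_le_compat_l A) in Hdl; [| lra].
  replace (A * (1 / A)) with 1 in Hdl by (field; lra). exact Hdl.
Qed.

Let close_refl : Rabs (s0 - s0) <= 1.
Proof. rewrite Rminus_diag, Rabs_R0. lra. Qed.

Lemma kray_tail s t sg : Rabs (s - s0) <= 1 -> T0 < sg -> kray s t sg = 0.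
Proof.
  intros Hs Hsg. apply Hsupp. left.
  assert (H1 : Rabs s0 + 1 + r < sg * A).
  { apply (Rmult_lt_compat_r A) in Hsg; [| exact A_pos].
    unfold T0, Rdiv in Hsg. rewrite Rmult_assoc, Rinv_l in Hsg; lra. }
  pose proof (Rabs_sub_le_add (sg * a) s) as H2.
  rewrite Rabs_mult, (Rabs_right sg) in H2 by lra.
  pose proof (Rabs_triang s0 (s - s0)) as H3. replace (s0 + (s - s0)) with s in H3 by ring.
  fold A in H2. rewrite Rplus_comm. lra.
Qed.

Lemma RInt_kray_tail s t y : Rabs (s - s0) <= 1 -> T0 <= y ->
  RInt (kray s t) 0 y = RInt (kray s t) 0 T0.
Proof.
  intros Hs Hy. apply (RInt_vanishing_r _ (kray_continuous s t)); [| exact Hy].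
  intros; now apply kray_tail.
Qed.

Lemma RInt_gen_kray s t : Rabs (s - s0) <= 1 ->
  RInt_gen (kray s t) (at_point 0) (Rbar_locally p_infty) = RInt (kray s t) 0 T0.
Proof.
  intros Hs. apply (RInt_gen_pos_vanishing _ (kray_continuous s t)).
  intros; now apply kray_tail.
Qed.

Lemma ray_Radon_trunc s : Rabs (s - s0) <= 1 ->
  ray_Radon s = RInt_line (fun t => RInt (kray s t) 0 T0).
Proof.
  intros Hs. unfold ray_Radon. f_equal. apply functional_extensionality. intros t.
  now apply RInt_gen_kray.
Qed.

Lemma RInt_kray_shift dl t : Rabs dl <= 1 / A ->
  RInt (kray (s0 + a * dl) (t + dl * b)) 0 T0
  = RInt (kray s0 t) 0 T0 - RInt (kray s0 t) 0 dl.
Proof.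
  intros Hdl.
  pose proof (shift_close dl Hdl) as Hclose.
  destruct (proj1 (Rabs_le_between dl (1 / A)) Hdl) as [Hdl' _].
  rewrite <- (RInt_kray_tail _ _ (T0 + 1 / A)) by (auto; lra).
  rewrite (RInt_ext _ (fun sg => kray s0 t (sg + dl))) by (intros; unfold kray; f_equal; ring).
  rewrite RInt_shift, Rplus_0_l by apply kray_continuous.
  rewrite <- (RInt_kray_tail s0 t (T0 + 1 / A + dl)) by (auto; lra).
  assert (Hch : RInt (kray s0 t) 0 dl + RInt (kray s0 t) dl (T0 + 1 / A + dl)
                = RInt (kray s0 t) 0 (T0 + 1 / A + dl))
    by (apply (RInt_Chasles (V := R_CompleteNormedModule)); apply ex_RInt_cont, kray_continuous).
  lra.
Qed.

Lemma ray_Radon_shift dl : Rabs dl <= 1 / A ->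
  ray_Radon (s0 + a * dl) = ray_Radon s0 - RInt (fun t => RInt (kray s0 t) 0 dl) (- K) K.
Proof.
  intros Hdl.
  rewrite (ray_Radon_trunc (s0 + a * dl)), (ray_Radon_trunc s0) by auto.
  rewrite <- (RInt_line_shift _ _ (dl * b) (RInt_kray_supp (s0 + a * dl) T0)).
  rewrite (f_equal RInt_line (functional_extensionality _ _ (fun t => RInt_kray_shift dl t Hdl))).
  rewrite (RInt_line_minus _ _ _ _ (RInt_kray_supp s0 T0) (RInt_kray_supp s0 dl)).
  rewrite (RInt_line_supp _ K _ (RInt_kray_supp s0 dl)); [reflexivity |].
  unfold K. apply Rplus_le_compat_l.
  replace (Rabs b / A) with (1 / A * Rabs b) by (field; lra).
  apply Rmult_le_compat_r; [apply Rabs_pos | exact Hdl].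
Qed.

Lemma is_derive_RInt_strip :
  is_derive (fun dl => RInt (fun t => RInt (kray s0 t) 0 dl) (- K) K) 0 (RInt_line (k s0)).
Proof.
  assert (HD : forall u t, Derive (fun z => RInt (kray s0 t) 0 z) u = kray s0 t u).
  { intros. apply is_derive_unique, is_derive_RInt_upper, kray_continuous. }
  replace (RInt_line (k s0))
    with (RInt (fun t => Derive (fun u => RInt (kray s0 t) 0 u) 0) (- K) K).
  2: { rewrite (RInt_ext _ (k s0)) by (intros; rewrite HD; unfold kray; f_equal; ring).
       symmetry. apply (RInt_line_supp r).
       - split; [| split]; [| exact Hr |].
         + intros t. apply continuity_2d_pt_slice, Hk.
         + intros t Ht. apply Hsupp. now right.
       - unfold K. pose proof (Rabs_pos b).
         assert (0 <= Rabs b / A) by (apply Rdiv_le_0_compat; lra). lra. }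
  apply (is_derive_RInt_param (fun u t => RInt (kray s0 t) 0 u)).
  - apply filter_forall. intros y t _. eexists. apply is_derive_RInt_upper, kray_continuous.
  - intros t _. apply (continuity_2d_pt_ext (fun u v => kray s0 v u)).
    + intros; symmetry; apply HD.
    + apply (continuity_2d_pt_affine k Hk _ s0 a 0 0 b 1). intros; unfold kray; f_equal; ring.
  - apply filter_forall. intros y. apply ex_RInt_cont, (RInt_kray_supp s0 y).
Qed.

Lemma is_derive_ray_Radon : is_derive ray_Radon s0 (- RInt_line (k s0) / a).
Proof.
  apply (is_derive_ext_loc (fun s => ray_Radon s0 - RInt (fun t => RInt (kray s0 t) 0 ((s - s0) / a)) (- K) K)).
  - exists (mkposreal 1 Rlt_0_1). intros s Hs. change (Rabs (s - s0) < 1) in Hs.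
    assert (Hd : Rabs ((s - s0) / a) <= 1 / A).
    { unfold Rdiv. rewrite Rabs_mult, Rabs_inv. fold A.
      apply Rmult_le_compat_r; [left; apply Rinv_0_lt_compat |]; lra. }
    rewrite <- ray_Radon_shift by exact Hd. f_equal. field. exact Ha.
  - set (Phi dl := RInt (fun t => RInt (kray s0 t) 0 dl) (- K) K).
    assert (Hlin : is_derive (fun s => (s - s0) / a) s0 (1 / a))
      by (auto_derive; [auto | field; exact Ha]).
    assert (HPhi : is_derive Phi ((s0 - s0) / a) (RInt_line (k s0))).
    { replace ((s0 - s0) / a) with 0 by (field; exact Ha). apply is_derive_RInt_strip. }
    pose proof (is_derive_minus _ _ s0 _ _ (is_derive_const (ray_Radon s0) s0)
                  (is_derive_comp Phi _ s0 _ _ HPhi Hlin)) as H.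
    replace (- RInt_line (k s0) / a) with (minus zero (scal (1 / a) (RInt_line (k s0)))).
    + exact H.
    + unfold minus, zero, scal, plus, opp, mult; simpl. unfold mult; simpl. field. exact Ha.
Qed.

Lemma is_RInt_line_ray_Radon :
  is_RInt_gen (fun t => RInt_gen (kray s0 t) (at_point 0) (Rbar_locally p_infty))
    (Rbar_locally m_infty) (Rbar_locally p_infty) (ray_Radon s0).
Proof.
  rewrite (functional_extensionality _ _ (fun t => RInt_gen_kray s0 t close_refl)).
  rewrite ray_Radon_trunc by exact close_refl.
  apply (is_RInt_line _ _ (RInt_kray_supp s0 T0)).
Qed.

End RayIntegral.

Definition frame (psi : R * R) (u v : R) : R * R := vadd (vscal u psi) (vscal v (perp psi)).

Definition cont_supp_disc (r : R) (h : R * R -> R) : Prop :=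
  (forall p, continuous h p) /\ 0 <= r /\ forall x, r < vnorm x -> h x = 0.

Lemma cont_supp_disc_mono r r' h : r <= r' -> cont_supp_disc r h -> cont_supp_disc r' h.
Proof. intros Hr [Hc [Hr0 Hz]]. split; [| split]; auto; try lra. intros x Hx. apply Hz. lra. Qed.

Lemma C2c_disc_cont_supp rho h : C2c_disc rho h -> exists r, cont_supp_disc r h.
Proof.
  intros [[[_ Hc] _] [r [_ Hz]]]. exists (Rmax r 0). split; [| split].
  - intros p. apply Hc.
  - apply Rmax_r.
  - intros x Hx. apply Hz. pose proof (Rmax_l r 0). lra.
Qed.

Lemma cont_supp_disc_dot (f : R * R -> R * R) r w :
  cont_supp_disc r (fun x => fst (f x)) -> cont_supp_disc r (fun x => snd (f x)) ->
  cont_supp_disc r (fun x => dot (f x) w).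
Proof.
  intros [Hc1 [Hr Hz1]] [Hc2 [_ Hz2]]. split; [| split]; [| exact Hr |].
  - intros p. unfold dot.
    apply (continuous_plus (fun y => fst (f y) * fst w) (fun y => snd (f y) * snd w)).
    + apply (continuous_mult (fun y => fst (f y)) (fun _ => fst w)); [apply Hc1 | apply continuous_const].
    + apply (continuous_mult (fun y => snd (f y)) (fun _ => snd w)); [apply Hc2 | apply continuous_const].
  - intros x Hx. unfold dot. rewrite Hz1, Hz2 by exact Hx. ring.
Qed.

Section Frame.
Variable psi : R * R.
Hypothesis Hpsi : is_unit psi.

Lemma frame_add_ray gm s t sg :
  vadd (frame psi s t) (vscal sg gm)
  = frame psi (s + sg * dot psi gm) (t + sg * dot gm (perp psi)).
Proof.
  unfold is_unit, dot in Hpsi. destruct psi as [p1 p2], gm as [g1 g2].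
  unfold frame, vadd, vscal, perp, dot in *; simpl in *. f_equal.
  - transitivity (s * p1 + t * - p2 + sg * g1 * (p1 * p1 + p2 * p2)); [rewrite Hpsi |]; ring.
  - transitivity (s * p2 + t * p1 + sg * g2 * (p1 * p1 + p2 * p2)); [rewrite Hpsi |]; ring.
Qed.

Lemma dot_frame u v : dot (frame psi u v) (frame psi u v) = u * u + v * v.
Proof.
  unfold is_unit, dot in Hpsi. destruct psi as [p1 p2].
  unfold frame, vadd, vscal, perp, dot in *; simpl in *.
  transitivity ((u * u + v * v) * (p1 * p1 + p2 * p2)); [ring | rewrite Hpsi; ring].
Qed.

Variable h : R * R -> R.
Variable r : R.
Hypothesis Hh : cont_supp_disc r h.

Lemma frame_continuity_2d u v : continuity_2d_pt (fun u v => h (frame psi u v)) u v.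
Proof.
  destruct Hh as [Hc _]. destruct psi as [p1 p2].
  apply (continuity_2d_pt_affine (fun x y => h (x, y))) with 0 p1 (- p2) 0 p2 p1.
  - intros x y. apply continuity_2d_pt_filterlim.
    apply (continuous_ext h (fun z => h (fst z, snd z))); [now intros [] | apply Hc].
  - intros x y. unfold frame, vadd, vscal, perp; simpl. f_equal. f_equal; ring.
Qed.

Lemma frame_vanishing u v : r < Rabs u \/ r < Rabs v -> h (frame psi u v) = 0.
Proof.
  destruct Hh as [_ [_ Hz]]. intros Huv. apply Hz. unfold vnorm. rewrite dot_frame.
  destruct Huv as [H | H]; eapply Rlt_le_trans; try exact H;
    rewrite <- sqrt_Rsqr_abs; apply sqrt_le_1_alt; unfold Rsqr; nra.
Qed.

Lemma frame_slice_supp s : cont_supp r (fun t => h (frame psi s t)).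
Proof.
  split; [| split].
  - intros t. apply (continuity_2d_pt_slice (fun u v => h (frame psi u v))), frame_continuity_2d.
  - apply Hh.
  - intros t Ht. apply frame_vanishing. now right.
Qed.

Lemma Radon_Xray_ray_Radon gm s :
  Radon (Xray gm h) psi s = ray_Radon (fun u v => h (frame psi u v)) (dot psi gm) (dot gm (perp psi)) s.
Proof.
  unfold Radon, ray_Radon, RInt_line. f_equal. apply functional_extensionality. intros t.
  unfold Xray. f_equal. apply functional_extensionality. intros sg.
  unfold kray. f_equal. apply frame_add_ray.
Qed.

Variable gm : R * R.
Hypothesis Hgm : dot psi gm <> 0.

Lemma is_RInt_line_Xray s :
  is_RInt_gen (fun t => Xray gm h (frame psi s t)) (Rbar_locally m_infty) (Rbar_locally p_infty)
    (Radon (Xray gm h) psi s).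
Proof.
  rewrite Radon_Xray_ray_Radon.
  replace (fun t => Xray gm h (frame psi s t))
    with (fun t => RInt_gen (kray (fun u v => h (frame psi u v)) (dot psi gm) (dot gm (perp psi)) s t)
                     (at_point 0) (Rbar_locally p_infty)).
  - apply is_RInt_line_ray_Radon with r; try apply Hh; auto using frame_continuity_2d, frame_vanishing.
  - apply functional_extensionality. intros t. unfold Xray. f_equal.
    apply functional_extensionality. intros sg. unfold kray. f_equal. symmetry. apply frame_add_ray.
Qed.

Lemma is_derive_Radon_Xray s :
  is_derive (Radon (Xray gm h) psi) s (- Radon h psi s / dot psi gm).
Proof.
  apply (is_derive_ext (ray_Radon (fun u v => h (frame psi u v)) (dot psi gm) (dot gm (perp psi)))).
  { intros; symmetry; apply Radon_Xray_ray_Radon. }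
  apply is_derive_ray_Radon with r; try apply Hh; auto using frame_continuity_2d, frame_vanishing.
Qed.

End Frame.

Lemma sumR_ext m (F G : nat -> R) : (forall i, (i < m)%nat -> F i = G i) -> sumR m F = sumR m G.
Proof.
  induction m as [| m IH]; intros H; simpl; auto.
  rewrite IH, H; auto.
Qed.

Lemma sumR_lin2 m (F G : nat -> R) x y :
  sumR m F * x + sumR m G * y = sumR m (fun i => F i * x + G i * y).
Proof. induction m as [| m IH]; simpl; [ring | rewrite <- IH; ring]. Qed.

Lemma fst_vsum m F : fst (vsum m F) = sumR m (fun i => fst (F i)).
Proof. induction m as [| m IH]; simpl; auto. now rewrite IH. Qed.

Lemma snd_vsum m F : snd (vsum m F) = sumR m (fun i => snd (F i)).
Proof. induction m as [| m IH]; simpl; auto. now rewrite IH. Qed.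

Lemma is_derive_sumR m (F : nat -> R -> R) (d : nat -> R) x :
  (forall i, (i < m)%nat -> is_derive (F i) x (d i)) ->
  is_derive (fun y => sumR m (fun i => F i y)) x (sumR m d).
Proof.
  induction m as [| m IH]; intros H; simpl.
  - apply (is_derive_const 0 x).
  - apply (is_derive_plus (fun y => sumR m (fun i => F i y)) (F m)); auto.
Qed.

Lemma Radon_sumR m (c : nat -> R) (H : nat -> R * R -> R) psi s :
  (forall i, (i < m)%nat ->
     is_RInt_gen (fun t => H i (frame psi s t)) (Rbar_locally m_infty) (Rbar_locally p_infty)
       (Radon (H i) psi s)) ->
  Radon (fun x => sumR m (fun i => c i * H i x)) psi s = sumR m (fun i => c i * Radon (H i) psi s).
Proof.
  intros HI. apply (is_RInt_gen_unique (V := R_CompleteNormedModule)).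
  apply (is_RInt_line_sum m (fun i t => c i * H i (frame psi s t))).
  intros i Hi. now apply (is_RInt_gen_scal (V := R_NormedModule)), HI.
Qed.

Lemma is_derive_Radon_sumR_Xray m c gam (h : nat -> R * R -> R) r psi s :
  is_unit psi -> (forall i, (i < m)%nat -> dot psi (gam i) <> 0) ->
  (forall i, (i < m)%nat -> cont_supp_disc r (h i)) ->
  is_derive (Radon (fun x => sumR m (fun i => c i * Xray (gam i) (h i) x)) psi) s
    (sumR m (fun i => c i * (- Radon (h i) psi s / dot psi (gam i)))).
Proof.
  intros Hpsi Ha Hh.
  apply (is_derive_ext (fun s' => sumR m (fun i => c i * Radon (Xray (gam i) (h i)) psi s'))).
  { intros s'. symmetry. apply Radon_sumR. intros i Hi.
    apply is_RInt_line_Xray with r; auto. }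
  apply (is_derive_sumR m (fun i s' => c i * Radon (Xray (gam i) (h i)) psi s')).
  intros i Hi. apply is_derive_scal. apply is_derive_Radon_Xray with r; auto.
Qed.

Lemma Radon_dot (f : R * R -> R * R) r psi s w :
  cont_supp_disc r (fun x => fst (f x)) -> cont_supp_disc r (fun x => snd (f x)) -> is_unit psi ->
  Radon (fun y => dot (f y) w) psi s = dot (RadonV f psi s) w.
Proof.
  intros H1 H2 Hpsi.
  apply (RInt_line_lin2 r (fun t => fst (f (frame psi s t))) (fun t => snd (f (frame psi s t))));
    [apply (frame_slice_supp psi Hpsi (fun x => fst (f x))) |
     apply (frame_slice_supp psi Hpsi (fun x => snd (f x)))]; assumption.
Qed.

Lemma is_derive_Radon_sumR_Xray_dot m c gam (f : R * R -> R * R) r psi s (w : nat -> R * R) :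
  cont_supp_disc r (fun x => fst (f x)) -> cont_supp_disc r (fun x => snd (f x)) ->
  is_unit psi -> ~ in_Z1 m gam psi ->
  is_derive (Radon (fun x => sumR m (fun i => c i * Xray (gam i) (fun y => dot (f y) (w i)) x)) psi) s
    (sumR m (fun i => c i * (- dot (RadonV f psi s) (w i) / dot psi (gam i)))).
Proof.
  intros H1 H2 Hpsi HZ1.
  rewrite (sumR_ext m _ (fun i => c i * (- Radon (fun y => dot (f y) (w i)) psi s / dot psi (gam i))))
    by (intros; erewrite Radon_dot; eauto).
  apply is_derive_Radon_sumR_Xray with r; auto using cont_supp_disc_dot.
  intros i Hi H0. apply HZ1. now exists i.
Qed.

Lemma Radon_star_fst m c gam f psi s :
  fst (RadonV (star m c gam f) psi s)
  = Radon (fun x => sumR m (fun i => c i * Xray (gam i) (fun y => dot (f y) (gam i)) x)) psi s.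
Proof.
  unfold RadonV, star; simpl. f_equal. apply functional_extensionality. intros x.
  now rewrite fst_vsum.
Qed.

Lemma Radon_star_snd m c gam f psi s :
  snd (RadonV (star m c gam f) psi s)
  = Radon (fun x => sumR m (fun i => c i * Xray (gam i) (fun y => dot (f y) (perp (gam i))) x)) psi s.
Proof.
  unfold RadonV, star; simpl. f_equal. apply functional_extensionality. intros x.
  now rewrite snd_vsum.
Qed.

Lemma dot_gamma_psi m c gam psi v :
  dot (gamma_psi m c gam psi) v = sumR m (fun i => c i * (- dot v (gam i) / dot psi (gam i))).
Proof.
  unfold gamma_psi, vscal at 1, dot at 1. simpl. rewrite fst_vsum, snd_vsum. simpl.
  replace (-1 * sumR m (fun i => c i / dot psi (gam i) * fst (gam i)) * fst v) with
    (sumR m (fun i => c i / dot psi (gam i) * fst (gam i)) * - fst v) by ring.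
  replace (-1 * sumR m (fun i => c i / dot psi (gam i) * snd (gam i)) * snd v) with
    (sumR m (fun i => c i / dot psi (gam i) * snd (gam i)) * - snd v) by ring.
  rewrite sumR_lin2. apply sumR_ext. intros i _. unfold dot, Rdiv. ring.
Qed.

Lemma dot_perp_gamma_psi m c gam psi v :
  dot (perp (gamma_psi m c gam psi)) v
  = sumR m (fun i => c i * (- dot v (perp (gam i)) / dot psi (gam i))).
Proof.
  unfold gamma_psi, perp at 1, vscal at 1, dot at 1. simpl. rewrite fst_vsum, snd_vsum. simpl.
  replace (- (-1 * sumR m (fun i => c i / dot psi (gam i) * snd (gam i))) * fst v) with
    (sumR m (fun i => c i / dot psi (gam i) * snd (gam i)) * fst v) by ring.
  replace (-1 * sumR m (fun i => c i / dot psi (gam i) * fst (gam i)) * snd v) with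
    (sumR m (fun i => c i / dot psi (gam i) * fst (gam i)) * - snd v) by ring.
  rewrite sumR_lin2. apply sumR_ext. intros i _. unfold dot, perp, Rdiv. simpl. ring.
Qed.

Lemma mulmv_inv2K M v : det2 M <> 0 -> mulmv (inv2 M) (mulmv M v) = v.
Proof.
  destruct M as [[a b] [c d]], v as [x y]. unfold inv2, det2, mulmv, dot; simpl.
  intros H. f_equal; field; exact H.
Qed.

Lemma det2_rows_perp g : det2 (mat2_of_rows g (perp g)) = dot g g.
Proof. destruct g. unfold det2, mat2_of_rows, perp, dot. simpl. ring. Qed.

Lemma dot_self_neq0 g : g <> (0, 0) -> dot g g <> 0.
Proof.
  destruct g as [x y]. unfold dot. simpl. intros Hg H. apply Hg.
  assert (x = 0) by nra. assert (y = 0) by nra. now subst.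
Qed.

Theorem theorem7
  (rho : R) (Hrho : 0 < rho)
  (f : R * R -> R * R)
  (Hf1 : C2c_disc rho (fun x => fst (f x)))
  (Hf2 : C2c_disc rho (fun x => snd (f x)))
  (m : nat) (gam : nat -> R * R) (c : nat -> R)
  (Hunit : forall i, (i < m)%nat -> is_unit (gam i))
  (Hdist : forall i j, (i < m)%nat -> (j < m)%nat -> i <> j -> gam i <> gam j)
  (Hc : forall i, (i < m)%nat -> c i <> 0)
  (psi : R * R) (Hpsi : is_unit psi)
  (HZ1 : ~ in_Z1 m gam psi) (HZ2 : ~ in_Z2 m c gam psi)
  (s : R) :
  exists d1 d2 : R,
    is_derive (fun s' => fst (RadonV (star m c gam f) psi s')) s d1 /\
    is_derive (fun s' => snd (RadonV (star m c gam f) psi s')) s d2 /\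
    mulmv (Qmat m c gam psi) (d1, d2) = RadonV f psi s.
Proof.
  destruct (C2c_disc_cont_supp _ _ Hf1) as [r1 H1].
  destruct (C2c_disc_cont_supp _ _ Hf2) as [r2 H2].
  apply (cont_supp_disc_mono _ (Rmax r1 r2)) in H1; [| apply Rmax_l].
  apply (cont_supp_disc_mono _ (Rmax r1 r2)) in H2; [| apply Rmax_r].
  set (g := gamma_psi m c gam psi).
  exists (dot g (RadonV f psi s)), (dot (perp g) (RadonV f psi s)).
  split; [| split].
  - eapply is_derive_ext; [intros t; symmetry; apply Radon_star_fst |].
    unfold g. rewrite dot_gamma_psi. now apply is_derive_Radon_sumR_Xray_dot with (Rmax r1 r2).
  - eapply is_derive_ext; [intros t; symmetry; apply Radon_star_snd |].
    unfold g. rewrite dot_perp_gamma_psi.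
    now apply is_derive_Radon_sumR_Xray_dot with (Rmax r1 r2).
  - apply mulmv_inv2K. rewrite det2_rows_perp. apply dot_self_neq0.
    intros Hg. now apply HZ2.
Qed.
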